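(* Assume $a^2\rho(\mathbf P_1\mathbf E)<1$. For every $\theta\in\mathbb N$, every reception index $j$, every $\gamma_{S_j}\in\{1,\dots,n\}$ and every value $x_{S_j}\in\mathbb R$, the performance-evaluation function satisfies $\mathcal J_{S_j}^\theta\le\mathcal R_j(\theta)$, where $$\mathcal R_j(\theta):=\big[\tilde g_\theta(\bar a^2,\gamma_{S_j})-\tilde g_\theta(c^2,\gamma_{S_j})\big]\frac{B}{c^{2\theta}}+\bar M\big[\tilde g_\theta(a^2,\gamma_{S_j})-\tilde g_\theta(1,\gamma_{S_j})\big],$$ with $\tilde g_\theta(b,\gamma):=b^\theta\,\mathbf d^T(\mathbf I-b\mathbf P_1\mathbf E)^{-1}\mathbf P_0^{\theta-1}\mathbf P_1\boldsymbol\delta_\gamma$.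
   Context: Setup. Fix reals $a,L$ with $|a|>1$ and $\bar a:=a+L$ satisfying $0<\bar a^2<1$; fix $c$ with $\bar a^2<c^2<1$, $M>0$, $B>0$, and $\bar M:=M/(a^2-1)$. Plant $x_{k+1}=ax_k+u_k+v_k$, $v_k$ i.i.d., mean $0$, variance $M$, independent of everything else. Sensor decisions $t_k\in\{0,1\}$, receptions $r_k\in\{0,1\}$ ($r_k=0$ if $t_k=0$). Controller $u_k=L\hat x_k^+$, $\hat x_k:=\bar a\hat x_{k-1}^+$, $\hat x_k^+:=x_k$ if $r_k=1$, else $\hat x_k$. Channel state $\gamma_k\in\{1,\dots,n\}$ with $\Pr[\gamma_{k+1}=i\mid\gamma_k=j,t_k=\ell]=(\mathbf P_\ell)_{ij}$, $\mathbf P_0,\mathbf P_1$ column-stochastic; drop probabilities $\mathbf e\in[0,1]^n$ (if $t_k=1$, $r_k=1$ w.p. $1-e_{\gamma_k}$); $\mathbf E:=\mathrm{diag}(\mathbf e)$, $\mathbf d:=\mathbf 1-\mathbf e$, $\mathbf P^0:=\mathbf I$, $\boldsymbol\delta_i$ standard basis vectors, $\rho$ spectral radius. $r_0=1$; $R_k:=\max\{i<k:r_i=1\}$; $S_0:=0$, $S_{j+1}:=\min\{k>S_j:r_k=1\}$. $I_k^+$ denotes the sensor's post-transmission information at time $k$, which at a reception time $S_j$ consists of $x_{S_j}$, $z^+_{S_j}=0$, $S_j$ and $\gamma_{S_j}$. Performance function $h_k:=x_k^2-\max\{c^{2(k-R_k)}x_{R_k}^2,B\}$. Nominal policy $\mathcal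 T_k^D$: $t_i=0$ for $k\le i\le k+D-1$, $t_i=1$ for $i\ge k+D$. Performance-evaluation function: $\mathcal J_{S_j}^\theta:=\mathbb E_{\mathcal T^{\theta-1}_{S_j+1}}[h_{S_{j+1}}\mid I_{S_j}^+]=\sum_{w\ge\theta}H(w,x_{S_j}^2)\,\mathbf d^T(\mathbf P_1\mathbf E)^{w-\theta}\mathbf P_0^{\theta-1}\mathbf P_1\boldsymbol\delta_{\gamma_{S_j}}$, where $H(w,y):=\bar a^{2w}y+\bar M(a^{2w}-1)-\max\{c^{2w}y,B\}$. *)

(* classical reals, matrices as functions on indices 0..n-1. *)
From Stdlib Require Import Reals Lra ClassicalEpsilon.
Open Scope R_scope.

Fixpoint fsum (n : nat) (f : nat -> R) : R :=
  match n with O => 0 | S m => fsum m f + f m end.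

Definition vec := nat -> R.
Definition mat := nat -> nat -> R.

Definition mid : mat := fun i j => if Nat.eqb i j then 1 else 0.
Definition mdiag (v : vec) : mat := fun i j => if Nat.eqb i j then v i else 0.
Definition mmul (n : nat) (A B : mat) : mat :=
  fun i j => fsum n (fun k => A i k * B k j).
Definition msub (A B : mat) : mat := fun i j => A i j - B i j.
Definition mscale (b : R) (A : mat) : mat := fun i j => b * A i j.
Fixpoint mpow (n : nat) (A : mat) (k : nat) : mat :=
  match k with O => mid | S k' => mmul n A (mpow n A k') end.

Definition is_minv (n : nat) (A X : mat) : Prop :=
  (forall i j, (i < n)%nat -> (j < n)%nat -> mmul n A X i j = mid i j) /\
  (forall i j, (i < n)%nat -> (j < n)%nat -> mmul n X A i j = mid i j).

(* the inverse matrix (chosen by classical choice; unique when it exists) *)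
Definition minv (n : nat) (A : mat) : mat :=
  epsilon (inhabits mid) (fun X => is_minv n A X).

Definition col_stochastic (n : nat) (P : mat) : Prop :=
  (forall i j, (i < n)%nat -> (j < n)%nat -> 0 <= P i j) /\
  (forall j, (j < n)%nat -> fsum n (fun i => P i j) = 1).

(* re + i im is a (complex) eigenvalue of the real n x n matrix A:
   there is a nonzero complex vector x + i y with A(x+iy) = (re+i im)(x+iy). *)
Definition ceigen (n : nat) (A : mat) (re im : R) : Prop :=
  exists x y : vec,
    (exists i, (i < n)%nat /\ (x i <> 0 \/ y i <> 0)) /\
    (forall i, (i < n)%nat ->
       fsum n (fun k => A i k * x k) = re * x i - im * y i /\
       fsum n (fun k => A i k * y k) = im * x i + re * y i).

Definition dTMdelta (n : nat) (d : vec) (Mx : mat) (g : nat) : R :=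
  fsum n (fun i => d i * Mx i g).

Definition Hfun (abar a c Mbar B : R) (w : nat) (y : R) : R :=
  abar ^ (2 * w) * y + Mbar * (a ^ (2 * w) - 1) - Rmax (c ^ (2 * w) * y) B.

(* term w = theta + k of the series defining J^theta *)
Definition Jterm (n : nat) (abar a c Mbar B : R) (P0 P1 : mat) (e : vec)
    (theta : nat) (y : R) (g : nat) (k : nat) : R :=
  let d := fun i => 1 - e i in
  let P1E := mmul n P1 (mdiag e) in
  Hfun abar a c Mbar B (theta + k) y *
  dTMdelta n d (mmul n (mpow n P1E k) (mmul n (mpow n P0 (theta - 1)) P1)) g.

Definition gtilde (n : nat) (P0 P1 : mat) (e : vec) (theta : nat) (b : R) (g : nat) : R :=
  let d := fun i => 1 - e i in
  let P1E := mmul n P1 (mdiag e) in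
  b ^ theta *
  dTMdelta n d (mmul n (minv n (msub mid (mscale b P1E)))
                       (mmul n (mpow n P0 (theta - 1)) P1)) g.

From Stdlib Require Import Reals Lra Lia Classical ClassicalEpsilon.
From Coquelicot Require Import Coquelicot.
Open Scope R_scope.

(* Write A = P1 E, z = P0^(theta-1) P1 delta_g and f_k = d^T A^k z >= 0, so that
   J = sum_k H(theta+k, x^2) f_k.  For w >= theta,
     H(w, y) <= (abar^(2w) - c^(2w)) B / c^(2 theta) + Mbar (a^(2w) - 1),
   and summing against f_k turns each power series sum_k b^(theta+k) f_k,
   b in {abar^2, c^2, a^2, 1}, into gtilde_theta(b, g) -- provided the Neumann
   series sum_k b^k A^k converges to (I - b A)^-1 for 0 <= b <= a^2.
   The spectral hypothesis only says that I - t A is invertible for 0 <= t <= a^2.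
   Since A >= 0, a continuity argument in t upgrades this to a vector v > 0 and
   some t' > a^2 with t' A v < v, which dominates A^k z by a geometric sequence. *)

Lemma fsum_ext n f g : (forall i, (i < n)%nat -> f i = g i) -> fsum n f = fsum n g.
Proof.
induction n as [|n IH]; intros H; simpl; [reflexivity|].
rewrite IH, H; [reflexivity|lia|intros; apply H; lia].
Qed.

Lemma fsum_add n f g : fsum n (fun i => f i + g i) = fsum n f + fsum n g.
Proof. induction n as [|n IH]; simpl; [lra|]. rewrite IH; ring. Qed.

Lemma fsum_scal n c f : fsum n (fun i => c * f i) = c * fsum n f.
Proof. induction n as [|n IH]; simpl; [ring|]. rewrite IH; ring. Qed.

Lemma fsum_const n c : fsum n (fun _ => c) = INR n * c.
Proof. induction n as [|n IH]; simpl fsum; [simpl; ring|]. rewrite IH, S_INR; ring. Qed.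

Lemma fsum_zero n : fsum n (fun _ => 0) = 0.
Proof. rewrite fsum_const; ring. Qed.

Lemma fsum_le n f g : (forall i, (i < n)%nat -> f i <= g i) -> fsum n f <= fsum n g.
Proof.
induction n as [|n IH]; intros H; simpl; [lra|].
apply Rplus_le_compat; [apply IH; intros; apply H|apply H]; lia.
Qed.

Lemma fsum_ge0 n f : (forall i, (i < n)%nat -> 0 <= f i) -> 0 <= fsum n f.
Proof. intros H. rewrite <- (fsum_zero n). now apply fsum_le. Qed.

Lemma fsum_le_term n f i :
  (forall j, (j < n)%nat -> 0 <= f j) -> (i < n)%nat -> f i <= fsum n f.
Proof.
induction n as [|n IH]; intros H Hi; simpl; [lia|].
assert (0 <= fsum n f) by (apply fsum_ge0; intros; apply H; lia).
destruct (Nat.eq_dec i n) as [->|Hne]; [lra|].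
assert (f i <= fsum n f) by (apply IH; [intros; apply H|]; lia).
assert (0 <= f n) by (apply H; lia).
lra.
Qed.

Lemma fsum_abs n f : Rabs (fsum n f) <= fsum n (fun i => Rabs (f i)).
Proof.
induction n as [|n IH]; simpl; [rewrite Rabs_R0; lra|].
eapply Rle_trans; [apply Rabs_triang|lra].
Qed.

Lemma fsum_exchange n m (f : nat -> nat -> R) :
  fsum n (fun i => fsum m (fun j => f i j)) = fsum m (fun j => fsum n (fun i => f i j)).
Proof.
induction n as [|n IH]; simpl.
- symmetry; apply fsum_zero.
- rewrite IH, <- fsum_add; reflexivity.
Qed.

Lemma fsum_mid n i u : (i < n)%nat -> fsum n (fun k => mid i k * u k) = u i.
Proof.
induction n as [|n IH]; intros Hi; simpl; [lia|].
unfold mid at 2; destruct (Nat.eqb_spec i n) as [->|Hne].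
- rewrite (fsum_ext n _ (fun _ => 0 * 1)), fsum_const; [ring|].
  intros k Hk; unfold mid; destruct (Nat.eqb_spec n k); [lia|ring].
- rewrite IH by lia; ring.
Qed.

Definition mv (n : nat) (A : mat) (u : vec) : vec :=
  fun i => fsum n (fun k => A i k * u k).

Definition mat_nonneg (n : nat) (A : mat) : Prop :=
  forall i j, (i < n)%nat -> (j < n)%nat -> 0 <= A i j.

Module RealMatrixBridge.
From mathcomp Require Import all_boot all_algebra Rstruct.
Import GRing.Theory.

Lemma fsum_big n (f : nat -> R) : fsum n f = (\sum_(i < n) f i)%R.
Proof.
elim: n => [|m IH] /=; first by rewrite big_ord0.
by rewrite big_ord_recr /= IH.
Qed.

Lemma mid_inord m i j : (i < m.+1)%N -> (j < m.+1)%N ->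
  mid i j = ((inord i : 'I_m.+1) == inord j)%:R%R.
Proof.
move=> Hi Hj; rewrite /mid; case: Nat.eqb_spec => [->|ne]; first by rewrite eqxx.
by case: eqP => // /(congr1 val) /=; rewrite !inordK // => /ne.
Qed.

(* A singular matrix has a nonzero left kernel vector ([det0P] on the transpose). *)
Lemma is_minv_of_injective n (M : mat) :
  (forall u : vec, (forall i, Peano.lt i n -> mv n M u i = 0) ->
     forall i, Peano.lt i n -> u i = 0) ->
  exists X, is_minv n M X.
Proof.
case: n => [|m] Hinj.
  by exists mid; split => i j Hi; case: (Nat.nlt_0_r _ Hi).
pose Mm : 'M[R]_m.+1 := (\matrix_(i, j) M i j)%R.
have Hu : Mm \in unitmx.
  rewrite unitmxE unitfE; apply/negP => /eqP Hdet.
  have /det0P [w wn0 Hw] : (\det Mm^T == 0)%R by rewrite det_tr Hdet.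
  pose u : vec := fun k => if (k < m.+1)%N =P true is ReflectT p
                          then w ord0 (Ordinal p) else 0.
  have Hw_u (k : 'I_m.+1) : u k = w ord0 k.
    rewrite /u; case: eqP => [p|]; last by rewrite ltn_ord.
    by congr (w _ _); apply/val_inj.
  have Hu0 : forall i, Peano.lt i m.+1 -> mv m.+1 M u i = 0.
    move=> i /ltP Hi; rewrite /mv fsum_big.
    have := congr1 (fun B : 'rV_m.+1 => B ord0 (Ordinal Hi)) Hw.
    rewrite !mxE => H; apply: etrans H; apply: eq_bigr => j _.
    by rewrite !mxE mulrC Hw_u.
  move/negP: wn0; apply; apply/eqP/rowP => k.
  by rewrite mxE -Hw_u; apply: Hinj Hu0 k (elimT ltP (ltn_ord k)).
exists (fun i j => invmx Mm (inord i) (inord j)).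
split => i j /ltP Hi /ltP Hj; rewrite /mmul fsum_big (mid_inord m) //.
- have := congr1 (fun B : 'M_m.+1 => B (inord i) (inord j)) (mulmxV Hu).
  rewrite !mxE => <-; apply: eq_bigr => k _.
  by rewrite !mxE inordK // inord_val.
- have := congr1 (fun B : 'M_m.+1 => B (inord i) (inord j)) (mulVmx Hu).
  rewrite !mxE => <-; apply: eq_bigr => k _.
  by rewrite !mxE inordK // inord_val.
Qed.
End RealMatrixBridge.

Lemma mmul_nonneg n M N :
  mat_nonneg n M -> mat_nonneg n N -> mat_nonneg n (mmul n M N).
Proof. intros HM HN i j Hi Hj. apply fsum_ge0; intros k Hk. apply Rmult_le_pos; auto. Qed.

Lemma mpow_nonneg n M k : mat_nonneg n M -> mat_nonneg n (mpow n M k).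
Proof.
intros HM; induction k as [|k IH]; simpl; [|now apply mmul_nonneg].
intros i j _ _; unfold mid; destruct (Nat.eqb i j); lra.
Qed.

Lemma mdiag_nonneg n e : (forall i, (i < n)%nat -> 0 <= e i) -> mat_nonneg n (mdiag e).
Proof. intros He i j Hi _; unfold mdiag; destruct (Nat.eqb i j); [now apply He|lra]. Qed.

Lemma mv_ext n A u w i :
  (forall j, (j < n)%nat -> u j = w j) -> mv n A u i = mv n A w i.
Proof. intros H; apply fsum_ext; intros j Hj; now rewrite H. Qed.

Lemma mv_nonneg n A u :
  mat_nonneg n A -> (forall j, (j < n)%nat -> 0 <= u j) ->
  forall i, (i < n)%nat -> 0 <= mv n A u i.
Proof. intros HA Hu i Hi; apply fsum_ge0; intros k Hk; apply Rmult_le_pos; auto. Qed.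

Lemma mv_mmul n M N u i : mv n (mmul n M N) u i = mv n M (mv n N u) i.
Proof.
unfold mv, mmul.
rewrite (fsum_ext n (fun k => fsum n (fun l => M i l * N l k) * u k)
                    (fun k => fsum n (fun l => M i l * (N l k * u k))))
  by (intros; rewrite Rmult_comm, <- fsum_scal; apply fsum_ext; intros; ring).
rewrite fsum_exchange; apply fsum_ext; intros; apply fsum_scal.
Qed.

Lemma mv_resolvent n A t u i :
  (i < n)%nat -> mv n (msub mid (mscale t A)) u i = u i - t * mv n A u i.
Proof.
intros Hi; unfold mv, msub, mscale.
rewrite (fsum_ext n _ (fun k => mid i k * u k + - t * (A i k * u k))) by (intros; ring).
rewrite fsum_add, fsum_scal, fsum_mid by exact Hi; ring.
Qed.

Lemma mv_minv_r n M X u i : is_minv n M X -> (i < n)%nat -> mv n M (mv n X u) i = u i.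
Proof.
intros [HMX _] Hi; rewrite <- mv_mmul, <- (fsum_mid n i u Hi).
apply fsum_ext; intros k Hk; now rewrite HMX.
Qed.

Lemma mv_minv_l n M X u i : is_minv n M X -> (i < n)%nat -> mv n X (mv n M u) i = u i.
Proof.
intros [_ HXM] Hi; rewrite <- mv_mmul, <- (fsum_mid n i u Hi).
apply fsum_ext; intros k Hk; now rewrite HXM.
Qed.

(* If [t <= beta] and [u = t A u] with [u <> 0], then [1/t] is a real eigenvalue
   of [A] of modulus at least [1/beta]. *)
Lemma resolvent_invertible n A beta t :
  (forall re im, ceigen n A re im -> beta * sqrt (re ^ 2 + im ^ 2) < 1) ->
  0 <= t <= beta -> exists X, is_minv n (msub mid (mscale t A)) X.
Proof.
intros Hspec Ht; apply RealMatrixBridge.is_minv_of_injective.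
intros u Hu i Hi; apply NNPP; intros Hui.
assert (Hfix : forall j, (j < n)%nat -> u j = t * mv n A u j).
{ intros j Hj; specialize (Hu j Hj); rewrite mv_resolvent in Hu by exact Hj; lra. }
assert (Htpos : 0 < t).
{ destruct (Req_dec t 0) as [Ht0|Ht0]; [|lra].
  exfalso; apply Hui; rewrite (Hfix i Hi), Ht0; ring. }
assert (Heig : ceigen n A (/ t) 0).
{ exists u, (fun _ => 0); split; [exists i; auto|].
  intros j Hj; split.
  - change (mv n A u j = / t * u j - 0 * 0); rewrite (Hfix j Hj); field; lra.
  - rewrite (fsum_ext n _ (fun _ => 0)), fsum_zero by (intros; ring); ring. }
specialize (Hspec _ _ Heig).
replace ((/ t) ^ 2 + 0 ^ 2) with ((/ t) ^ 2) in Hspec by ring.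
rewrite sqrt_pow2 in Hspec by (left; apply Rinv_0_lt_compat, Htpos).
apply (Rmult_lt_compat_r t) in Hspec; [|exact Htpos].
rewrite Rmult_assoc, Rinv_l in Hspec by lra; lra.
Qed.

Definition vnorm1 (n : nat) (u : vec) : R := fsum n (fun i => Rabs (u i)).

Definition mnorm1 (n : nat) (M : mat) : R :=
  fsum n (fun i => fsum n (fun j => Rabs (M i j))).

Lemma vnorm1_ge0 n u : 0 <= vnorm1 n u.
Proof. apply fsum_ge0; intros; apply Rabs_pos. Qed.

Lemma mnorm1_ge0 n M : 0 <= mnorm1 n M.
Proof. apply fsum_ge0; intros; apply vnorm1_ge0. Qed.

Lemma Rabs_le_vnorm1 n u i : (i < n)%nat -> Rabs (u i) <= vnorm1 n u.
Proof. apply (fsum_le_term n (fun i => Rabs (u i))); intros; apply Rabs_pos. Qed.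

Lemma Rabs_le_mnorm1 n M i j : (i < n)%nat -> (j < n)%nat -> Rabs (M i j) <= mnorm1 n M.
Proof.
intros Hi Hj; apply Rle_trans with (vnorm1 n (M i)); [now apply Rabs_le_vnorm1|].
apply (fsum_le_term n (fun i => vnorm1 n (M i))); [intros; apply vnorm1_ge0|exact Hi].
Qed.

Lemma vnorm1_mv n M u : vnorm1 n (mv n M u) <= INR n * (mnorm1 n M * vnorm1 n u).
Proof.
rewrite <- fsum_const; apply fsum_le; intros i Hi.
eapply Rle_trans; [apply fsum_abs|].
unfold vnorm1; rewrite <- fsum_scal; apply fsum_le; intros k Hk.
rewrite Rabs_mult; apply Rmult_le_compat; try apply Rabs_pos; [|apply Rle_refl].
now apply Rabs_le_mnorm1.
Qed.

(* Solutions of [w - t A w = 1] stay bounded as [t] approaches a point [s] where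
   [I - s A] is invertible: [w = X (1 + (t - s) A w)] with [X = (I - s A)^-1]. *)
Lemma resolvent_solution_bounded n A s X :
  is_minv n (msub mid (mscale s A)) X ->
  exists delta W, 0 < delta /\ 0 <= W /\
    forall t w, s - delta < t <= s ->
      (forall i, (i < n)%nat -> w i - t * mv n A w i = 1) ->
      forall i, (i < n)%nat -> w i <= W.
Proof.
intros HX.
set (N := INR n); set (KX := mnorm1 n X); set (KA := mnorm1 n A).
assert (HN := pos_INR n); assert (HKX := mnorm1_ge0 n X); assert (HKA := mnorm1_ge0 n A).
fold N in HN; fold KX in HKX; fold KA in HKA.
assert (HD : 0 <= N * N * KX * KA) by (repeat apply Rmult_le_pos; assumption).
exists (/ (2 * (N * N * KX * KA) + 1)), (2 * (N * N * KX)).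
split; [apply Rinv_0_lt_compat; lra|split; [repeat apply Rmult_le_pos; lra|]].
intros t w Ht Hw.
set (q := (s - t) * (N * N * KX * KA)).
assert (Hq : 0 <= q /\ 2 * q <= 1).
{ split; [apply Rmult_le_pos; lra|].
  assert (Hst : s - t < / (2 * (N * N * KX * KA) + 1)) by lra.
  apply (Rmult_lt_compat_r (2 * (N * N * KX * KA) + 1)) in Hst; [|lra].
  rewrite Rinv_l in Hst by lra. unfold q; nra. }
assert (Hrepr : forall i, (i < n)%nat ->
          w i = mv n X (fun m => 1 + (t - s) * mv n A w m) i).
{ intros i Hi; rewrite <- (mv_minv_l n _ X w i HX Hi).
  apply mv_ext; intros m Hm; rewrite mv_resolvent by exact Hm.
  specialize (Hw m Hm); lra. }
assert (Hrhs : vnorm1 n (fun m => 1 + (t - s) * mv n A w m) <= N + (s - t) * (N * (KA * vnorm1 n w))).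
{ apply Rle_trans with (fsum n (fun m => 1 + (s - t) * Rabs (mv n A w m))).
  - apply fsum_le; intros m _; eapply Rle_trans; [apply Rabs_triang|].
    rewrite Rabs_R1, Rabs_mult, Rabs_left1 by lra; lra.
  - rewrite fsum_add, fsum_const, fsum_scal, Rmult_1_r.
    apply Rplus_le_compat_l, Rmult_le_compat_l; [lra|apply vnorm1_mv]. }
assert (Hnorm : vnorm1 n w <= N * (KX * (N + (s - t) * (N * (KA * vnorm1 n w))))).
{ apply Rle_trans with (vnorm1 n (mv n X (fun m => 1 + (t - s) * mv n A w m))).
  - apply Req_le, fsum_ext; intros i Hi; now rewrite <- Hrepr.
  - eapply Rle_trans; [apply vnorm1_mv|].
    apply Rmult_le_compat_l; [lra|apply Rmult_le_compat_l; assumption]. }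
assert (Hw1 : vnorm1 n w <= 2 * (N * N * KX)).
{ assert (vnorm1 n w <= N * N * KX + q * vnorm1 n w) by (unfold q; nra).
  assert (H0 := vnorm1_ge0 n w); nra. }
intros i Hi; eapply Rle_trans; [apply Rle_abs|].
apply Rle_trans with (vnorm1 n w); [now apply Rabs_le_vnorm1|exact Hw1].
Qed.

Lemma exists_pos_lower_bound n (h : nat -> R) :
  (forall i, (i < n)%nat -> 0 < h i) -> exists m, 0 < m /\ forall i, (i < n)%nat -> m <= h i.
Proof.
induction n as [|n IH]; intros H; [exists 1; split; [lra|intros; lia]|].
destruct IH as [m [Hm Hmh]]; [intros; apply H; lia|].
exists (Rmin m (h n)); split; [apply Rmin_glb_lt; auto|].
intros i Hi; destruct (Nat.eq_dec i n) as [->|Hne]; [apply Rmin_r|].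
eapply Rle_trans; [apply Rmin_l|apply Hmh; lia].
Qed.

Lemma exists_argmin n (h : nat -> R) :
  (1 <= n)%nat -> exists i0, (i0 < n)%nat /\ forall i, (i < n)%nat -> h i0 <= h i.
Proof.
induction n as [|n IH]; intros Hn; [lia|].
destruct (Nat.eq_dec n 0) as [->|Hn0].
{ exists 0%nat; split; [lia|]; intros i Hi; replace i with 0%nat by lia; lra. }
destruct IH as [i0 [Hi0 Hmin]]; [lia|].
destruct (Rle_lt_dec (h i0) (h n)) as [Hle|Hlt].
- exists i0; split; [lia|]; intros i Hi.
  destruct (Nat.eq_dec i n) as [->|Hne]; [exact Hle|apply Hmin; lia].
- exists n; split; [lia|]; intros i Hi.
  destruct (Nat.eq_dec i n) as [->|Hne]; [lra|].
  specialize (Hmin i ltac:(lia)); lra.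
Qed.

Section PositiveSupervector.
Variables (n : nat) (A : mat).
Hypothesis HA : mat_nonneg n A.

(* For nonnegative [A] this says [t * rho(A) < 1] (Collatz-Wielandt). *)
Definition has_pos_supervector (t : R) : Prop :=
  exists v : vec, (forall i, (i < n)%nat -> 0 < v i) /\
    forall i, (i < n)%nat -> t * mv n A v i < v i.

Lemma pos_supervector_0 : has_pos_supervector 0.
Proof. exists (fun _ => 1); split; intros; lra. Qed.

Lemma pos_supervector_le t t' :
  0 <= t' <= t -> has_pos_supervector t -> has_pos_supervector t'.
Proof.
intros Ht [v [Hv Hsup]]; exists v; split; auto; intros i Hi.
assert (0 <= mv n A v i) by (apply mv_nonneg; auto; intros; apply Rlt_le; auto).
specialize (Hsup i Hi); nra.
Qed.

Lemma pos_supervector_open t :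
  0 <= t -> has_pos_supervector t -> exists eps, 0 < eps /\ has_pos_supervector (t + eps).
Proof.
intros Ht [v [Hv Hsup]].
assert (HAv : forall i, (i < n)%nat -> 0 <= mv n A v i)
  by (apply mv_nonneg; auto; intros; apply Rlt_le; auto).
destruct (exists_pos_lower_bound n (fun i => (v i - t * mv n A v i) / (1 + mv n A v i)))
  as [eps [Heps Hle]].
{ intros i Hi; specialize (Hsup i Hi); specialize (HAv i Hi); apply Rdiv_lt_0_compat; lra. }
exists eps; split; auto; exists v; split; auto; intros i Hi.
specialize (Hle i Hi); specialize (Hsup i Hi); specialize (HAv i Hi); simpl in Hle.
apply (Rmult_le_compat_r (1 + mv n A v i)) in Hle; [|lra].
unfold Rdiv in Hle; rewrite Rmult_assoc, Rinv_l in Hle by lra; nra.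
Qed.

(* Minimum-ratio argument: at an index minimising [w i / v i] a nonpositive
   minimum would force [w - t A w <= 0] there. *)
Lemma resolvent_solution_pos t w :
  0 <= t -> has_pos_supervector t ->
  (forall i, (i < n)%nat -> w i - t * mv n A w i = 1) ->
  forall i, (i < n)%nat -> 0 < w i.
Proof.
intros Ht [v [Hv Hsup]] Hw i Hi.
destruct (exists_argmin n (fun i => w i / v i)) as [i0 [Hi0 Hmin]]; [lia|].
set (mu := w i0 / v i0) in *.
assert (Hge : forall j, (j < n)%nat -> mu * v j <= w j).
{ intros j Hj; specialize (Hmin j Hj); specialize (Hv j Hj); simpl in Hmin.
  apply (Rmult_le_compat_r (v j)) in Hmin; [|lra].
  unfold Rdiv in Hmin; rewrite Rmult_assoc, Rinv_l, Rmult_1_r in Hmin by lra; lra. }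
destruct (Rle_lt_dec mu 0) as [Hmu|Hmu]; [exfalso|specialize (Hge i Hi); specialize (Hv i Hi); nra].
assert (Hrest : 0 <= mv n A (fun j => w j - mu * v j) i0)
  by (apply mv_nonneg; auto; intros j Hj; specialize (Hge j Hj); lra).
assert (Hsplit : mv n A w i0 = mv n A (fun j => w j - mu * v j) i0 + mu * mv n A v i0).
{ unfold mv; rewrite <- fsum_scal, <- fsum_add; apply fsum_ext; intros; ring. }
assert (Hw0 : w i0 = mu * v i0) by (unfold mu; field; specialize (Hv i0 Hi0); lra).
specialize (Hw i0 Hi0); specialize (Hsup i0 Hi0).
assert (0 <= t * mv n A (fun j => w j - mu * v j) i0) by (apply Rmult_le_pos; auto).
rewrite Hsplit, Hw0 in Hw; nra.
Qed.

Lemma pos_supervector_closed s :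
  0 < s ->
  (forall t, 0 <= t <= s -> exists X, is_minv n (msub mid (mscale t A)) X) ->
  (forall eps, 0 < eps -> exists t, s - eps < t <= s /\ has_pos_supervector t) ->
  has_pos_supervector s.
Proof.
intros Hs Hinv Happrox.
destruct (Hinv s) as [X HX]; [lra|].
destruct (resolvent_solution_bounded n A s X HX) as [delta [W [Hdelta [HW Hbound]]]].
destruct (Happrox (Rmin delta (s / (W + 1)))) as [t [Ht Hsup]].
{ apply Rmin_glb_lt; [lra|apply Rdiv_lt_0_compat; lra]. }
assert (Htd : s - delta < t) by (pose proof (Rmin_l delta (s / (W + 1))); lra).
assert (HtW : (s - t) * (W + 1) < s).
{ assert (Hst : s - t < s / (W + 1)) by (pose proof (Rmin_r delta (s / (W + 1))); lra).
  apply (Rmult_lt_compat_r (W + 1)) in Hst; [|lra].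
  unfold Rdiv in Hst; rewrite Rmult_assoc, Rinv_l, Rmult_1_r in Hst by lra; exact Hst. }
assert (Htpos : 0 < t) by nra.
destruct (Hinv t) as [Y HY]; [lra|].
set (w := mv n Y (fun _ => 1)).
assert (Hw : forall i, (i < n)%nat -> w i - t * mv n A w i = 1).
{ intros i Hi; rewrite <- mv_resolvent by exact Hi; now apply (mv_minv_r n _ Y). }
assert (Hwpos := resolvent_solution_pos t w (Rlt_le _ _ Htpos) Hsup Hw).
exists w; split; auto; intros i Hi.
assert (Hwi : w i <= W) by (apply (Hbound t); auto; lra).
specialize (Hw i Hi); specialize (Hwpos i Hi).
apply (Rmult_lt_reg_l t); auto.
replace (t * (s * mv n A w i)) with (s * (w i - 1)) by (rewrite <- Hw; ring).
nra.
Qed.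

Lemma pos_supervector_beyond beta :
  0 <= beta ->
  (forall t, 0 <= t <= beta -> exists X, is_minv n (msub mid (mscale t A)) X) ->
  exists t, beta < t /\ has_pos_supervector t.
Proof.
intros Hb Hinv.
set (E := fun t => 0 <= t <= beta /\ has_pos_supervector t).
destruct (completeness E) as [s [Hub Hlub]].
{ exists beta; intros t [Ht _]; lra. }
{ exists 0; split; [lra|apply pos_supervector_0]. }
assert (Hs0 : 0 <= s) by (apply Hub; split; [lra|apply pos_supervector_0]).
assert (Hsb : s <= beta) by (apply Hlub; intros t [Ht _]; lra).
assert (Hsup : has_pos_supervector s).
{ destruct (Req_dec s 0) as [->|Hs]; [apply pos_supervector_0|].
  apply pos_supervector_closed; [lra|intros; apply Hinv; lra|].
  intros eps Heps; apply NNPP; intros Hno.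
  assert (s <= s - eps); [|lra].
  apply Hlub; intros t [Ht Hsupt]; apply Rnot_lt_le; intros Hlt; apply Hno.
  exists t; split; [split; [lra|apply Hub; split; auto]|exact Hsupt]. }
destruct (pos_supervector_open s Hs0 Hsup) as [eps [Heps Hsupe]].
destruct (Rle_lt_dec beta s) as [Hbs|Hbs]; [exists (s + eps); split; [lra|exact Hsupe]|].
exfalso.
assert (Ht : s < Rmin (s + eps) beta) by (apply Rmin_glb_lt; lra).
assert (HE : E (Rmin (s + eps) beta)).
{ split; [split; [lra|apply Rmin_r]|].
  apply (pos_supervector_le (s + eps)); [split; [lra|apply Rmin_l]|exact Hsupe]. }
specialize (Hub _ HE); lra.
Qed.

End PositiveSupervector.

Lemma is_series_Rext (a b : nat -> R) (l : R) :
  (forall k, a k = b k) -> is_series a l -> is_series b l.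
Proof. exact (is_series_ext a b l). Qed.

Lemma is_series_Rscal (c : R) (a : nat -> R) (l : R) :
  is_series a l -> is_series (fun k => c * a k) (c * l).
Proof. exact (is_series_scal c a l). Qed.

Lemma is_series_Rplus (a b : nat -> R) (la lb : R) :
  is_series a la -> is_series b lb -> is_series (fun k => a k + b k) (la + lb).
Proof. exact (is_series_plus a b la lb). Qed.

Lemma is_series_Rminus (a b : nat -> R) (la lb : R) :
  is_series a la -> is_series b lb -> is_series (fun k => a k - b k) (la - lb).
Proof. exact (is_series_minus a b la lb). Qed.

Lemma ex_series_Rle (a b : nat -> R) :
  (forall k, 0 <= a k <= b k) -> ex_series b -> ex_series a.
Proof.
intros Hab Hb; apply (ex_series_le a b); [|exact Hb].
intros k; change (Rabs (a k) <= b k); rewrite Rabs_pos_eq; apply Hab.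
Qed.

Lemma is_series_zero : is_series (fun _ : nat => 0) 0.
Proof.
assert (H0 : is_series (fun k => 0 * 0 ^ k) (0 * / (1 - 0)))
  by (apply is_series_Rscal, is_series_geom; rewrite Rabs_R0; lra).
rewrite Rmult_0_l in H0.
exact (is_series_Rext _ _ _ (fun k => Rmult_0_l _) H0).
Qed.

Lemma is_series_fsum n (F : nat -> nat -> R) (L : nat -> R) :
  (forall l, (l < n)%nat -> is_series (F l) (L l)) ->
  is_series (fun k => fsum n (fun l => F l k)) (fsum n L).
Proof.
induction n as [|n IH]; intros H; simpl.
- exact is_series_zero.
- apply is_series_Rplus; [apply IH; intros|apply H]; auto.
Qed.

Lemma is_series_le (a b : nat -> R) (la lb : R) :
  is_series a la -> is_series b lb -> (forall k, a k <= b k) -> la <= lb.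
Proof.
intros Ha Hb Hab.
assert (Hd : is_series (fun k => b k - a k) (lb - la)) by (apply is_series_Rminus; auto).
assert (Hle : Series (fun _ => 0) <= Series (fun k => b k - a k)).
{ apply Series_le; [intros k; specialize (Hab k); lra|eexists; eauto]. }
rewrite (is_series_unique _ _ is_series_zero), (is_series_unique _ _ Hd) in Hle; lra.
Qed.

Fixpoint mv_iter (n : nat) (A : mat) (z : vec) (k : nat) : vec :=
  match k with O => z | S k' => mv n A (mv_iter n A z k') end.

Lemma mmul_mpow_col n A Z g k i :
  (i < n)%nat -> mmul n (mpow n A k) Z i g = mv_iter n A (fun l => Z l g) k i.
Proof.
revert i; induction k as [|k IH]; intros i Hi; simpl.
- exact (fsum_mid n i (fun l => Z l g) Hi).
- change (mv n (mmul n A (mpow n A k)) (fun l => Z l g) i = mv n A (mv_iter n A (fun l => Z l g) k) i).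
  rewrite mv_mmul; apply mv_ext; intros j Hj; exact (IH j Hj).
Qed.

Section NeumannSeries.
Variables (n : nat) (A : mat) (z v : vec) (tp : R).
Hypothesis HA : mat_nonneg n A.
Hypothesis Hz : forall i, (i < n)%nat -> 0 <= z i.
Hypothesis Htp : 0 < tp.
Hypothesis Hv : forall i, (i < n)%nat -> 0 < v i.
Hypothesis Hsup : forall i, (i < n)%nat -> tp * mv n A v i < v i.

Lemma mv_iter_nonneg k i : (i < n)%nat -> 0 <= mv_iter n A z k i.
Proof.
revert i; induction k as [|k IH]; intros i Hi; simpl; [auto|].
apply mv_nonneg; auto.
Qed.

Lemma mv_iter_geometric :
  exists C, 0 <= C /\ forall k i, (i < n)%nat -> mv_iter n A z k i <= C * (/ tp) ^ k * v i.
Proof.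
assert (Hzv : forall i, (i < n)%nat -> 0 <= z i / v i)
  by (intros i Hi; apply Rdiv_le_0_compat; auto).
exists (fsum n (fun i => z i / v i)); split; [now apply fsum_ge0|].
set (C := fsum n (fun i => z i / v i)).
assert (HC : 0 <= C) by (now apply fsum_ge0).
induction k as [|k IH]; intros i Hi; simpl.
- assert (Hle : z i / v i <= C) by (now apply (fsum_le_term n (fun i => z i / v i))).
  specialize (Hv i Hi).
  apply (Rmult_le_compat_r (v i)) in Hle; [|lra].
  unfold Rdiv in Hle; rewrite Rmult_assoc, Rinv_l, Rmult_1_r in Hle by lra; lra.
- assert (Hp : 0 <= C * (/ tp) ^ k) by (apply Rmult_le_pos; [exact HC|apply pow_le, Rlt_le, Rinv_0_lt_compat, Htp]).
  apply Rle_trans with (C * (/ tp) ^ k * mv n A v i).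
  + unfold mv; rewrite <- fsum_scal; apply fsum_le; intros l Hl.
    specialize (IH l Hl); specialize (HA i l Hi Hl); nra.
  + assert (HAv : mv n A v i <= / tp * v i).
    { apply (Rmult_le_reg_l tp); auto.
      rewrite <- Rmult_assoc, Rinv_r, Rmult_1_l by lra; apply Rlt_le, Hsup, Hi. }
    replace (C * (/ tp * (/ tp) ^ k) * v i) with (C * (/ tp) ^ k * (/ tp * v i)) by ring.
    now apply Rmult_le_compat_l.
Qed.

Lemma neumann_ex_series b i :
  0 <= b < tp -> (i < n)%nat -> ex_series (fun k => b ^ k * mv_iter n A z k i).
Proof.
intros Hb Hi; destruct mv_iter_geometric as [C [HC Hgeo]].
assert (Hq : 0 <= b * / tp < 1).
{ split; [apply Rmult_le_pos; [lra|apply Rlt_le, Rinv_0_lt_compat, Htp]|].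
  apply (Rmult_lt_reg_r tp); auto; rewrite Rmult_assoc, Rinv_l by lra; lra. }
apply (ex_series_Rle _ (fun k => C * v i * (b * / tp) ^ k)).
- intros k; assert (Hbk : 0 <= b ^ k) by (apply pow_le; lra).
  split; [apply Rmult_le_pos; [exact Hbk|now apply mv_iter_nonneg]|].
  rewrite Rpow_mult_distr.
  replace (C * v i * (b ^ k * (/ tp) ^ k)) with (b ^ k * (C * (/ tp) ^ k * v i)) by ring.
  apply Rmult_le_compat_l; auto.
- exists (C * v i * / (1 - b * / tp)).
  apply is_series_Rscal, is_series_geom; rewrite Rabs_pos_eq; lra.
Qed.

Definition neumann (b : R) : vec := fun i => Series (fun k => b ^ k * mv_iter n A z k i).

Lemma neumann_is_series b i :
  0 <= b < tp -> (i < n)%nat -> is_series (fun k => b ^ k * mv_iter n A z k i) (neumann b i).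
Proof. intros; now apply Series_correct, neumann_ex_series. Qed.

Lemma neumann_fixpoint b i :
  0 <= b < tp -> (i < n)%nat -> neumann b i - b * mv n A (neumann b) i = z i.
Proof.
intros Hb Hi.
assert (Hshift : is_series (fun k => b ^ S k * mv_iter n A z (S k) i) (b * mv n A (neumann b) i)).
{ apply (is_series_Rext (fun k => b * fsum n (fun l => A i l * (b ^ k * mv_iter n A z k l)))).
  - intros k; simpl; unfold mv; rewrite Rmult_assoc, <- (fsum_scal n (b ^ k)).
    f_equal; apply fsum_ext; intros; ring.
  - apply is_series_Rscal, is_series_fsum; intros l Hl.
    apply is_series_Rscal, neumann_is_series; auto. }
assert (Htail : is_series (fun k => b ^ S k * mv_iter n A z (S k) i) (neumann b i - z i)).
{ apply (is_series_incr_1 (fun k => b ^ k * mv_iter n A z k i)).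
  assert (Hsum := neumann_is_series b i Hb Hi).
  replace (neumann b i) with (plus (neumann b i - z i) (b ^ 0 * mv_iter n A z 0 i)) in Hsum
    by (unfold plus; simpl; ring).
  exact Hsum. }
pose proof (is_series_unique _ _ Hshift); pose proof (is_series_unique _ _ Htail); lra.
Qed.

Lemma neumann_minv b X i :
  0 <= b < tp -> is_minv n (msub mid (mscale b A)) X -> (i < n)%nat ->
  neumann b i = mv n X z i.
Proof.
intros Hb HX Hi; rewrite <- (mv_minv_l n _ X (neumann b) i HX Hi).
apply mv_ext; intros j Hj; rewrite mv_resolvent by exact Hj.
now apply neumann_fixpoint.
Qed.

End NeumannSeries.

Lemma resolvent_is_series n A Z d g b tp :
  (g < n)%nat -> mat_nonneg n A -> mat_nonneg n Z -> has_pos_supervector n A tp ->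
  0 <= b < tp -> (exists X, is_minv n (msub mid (mscale b A)) X) ->
  is_series (fun k => b ^ k * dTMdelta n d (mmul n (mpow n A k) Z) g)
            (dTMdelta n d (mmul n (minv n (msub mid (mscale b A))) Z) g).
Proof.
intros Hg HA HZ [v [Hv Hsup]] Hb Hinv.
assert (HX : is_minv n (msub mid (mscale b A)) (minv n (msub mid (mscale b A))))
  by (unfold minv; apply epsilon_spec, Hinv).
set (z := fun l => Z l g).
assert (Hz : forall l, (l < n)%nat -> 0 <= z l) by (intros l Hl; apply HZ; assumption).
assert (Htp : 0 < tp) by lra.
apply (is_series_Rext (fun k => fsum n (fun i => d i * (b ^ k * mv_iter n A z k i)))).
{ intros k; unfold dTMdelta; rewrite <- fsum_scal; apply fsum_ext; intros i Hi.
  rewrite mmul_mpow_col by exact Hi; unfold z; ring. }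
apply is_series_fsum; intros i Hi; apply is_series_Rscal.
change (mmul n (minv n (msub mid (mscale b A))) Z i g)
  with (mv n (minv n (msub mid (mscale b A))) z i).
rewrite <- (neumann_minv n A z v tp HA Hz Htp Hv Hsup b _ i Hb HX Hi).
exact (neumann_is_series n A z v tp HA Hz Htp Hv Hsup b i Hb Hi).
Qed.

Lemma gtilde_is_series n P0 P1 e theta b g tp :
  (g < n)%nat -> mat_nonneg n P0 -> mat_nonneg n P1 -> (forall i, (i < n)%nat -> 0 <= e i) ->
  has_pos_supervector n (mmul n P1 (mdiag e)) tp -> 0 <= b < tp ->
  (exists X, is_minv n (msub mid (mscale b (mmul n P1 (mdiag e)))) X) ->
  is_series (fun k => b ^ (theta + k) *
                 dTMdelta n (fun i => 1 - e i)
                   (mmul n (mpow n (mmul n P1 (mdiag e)) k) (mmul n (mpow n P0 (theta - 1)) P1)) g)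
            (gtilde n P0 P1 e theta b g).
Proof.
intros Hg HP0 HP1 He Hsup Hb Hinv.
apply (is_series_Rext (fun k => b ^ theta * (b ^ k *
          dTMdelta n (fun i => 1 - e i)
            (mmul n (mpow n (mmul n P1 (mdiag e)) k) (mmul n (mpow n P0 (theta - 1)) P1)) g)));
  [intros; rewrite pow_add; ring|].
apply is_series_Rscal, (resolvent_is_series _ _ _ _ _ _ tp); auto.
- apply mmul_nonneg, mdiag_nonneg; assumption.
- apply mmul_nonneg; [apply mpow_nonneg|]; assumption.
Qed.

(* [y |-> abar^(2w) y - max (c^(2w) y) B] is maximal at [y = B / c^(2w)], and
   [c^(2w) <= c^(2 theta)] for [w >= theta]. *)
Lemma Hfun_le abar a c Mbar B theta w y :
  0 < abar ^ 2 < c ^ 2 -> c ^ 2 < 1 -> 0 < B -> 0 <= y -> (theta <= w)%nat ->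
  Hfun abar a c Mbar B w y <=
    ((abar ^ 2) ^ w - (c ^ 2) ^ w) * (B / c ^ (2 * theta)) + Mbar * ((a ^ 2) ^ w - 1 ^ w).
Proof.
intros Hac Hc HB Hy Hw; unfold Hfun; rewrite !pow_mult, pow1.
set (al := (abar ^ 2) ^ w); set (ga := (c ^ 2) ^ w); set (ka := (c ^ 2) ^ theta).
assert (Hal : 0 <= al <= ga) by (split; [apply pow_le|apply pow_incr]; lra).
assert (Hga : 0 < ga) by (apply pow_lt; lra).
assert (Hgk : ga <= ka).
{ unfold ga, ka; replace w with (theta + (w - theta))%nat by lia; rewrite pow_add.
  assert (0 < (c ^ 2) ^ theta) by (apply pow_lt; lra).
  assert ((c ^ 2) ^ (w - theta) <= 1) by (rewrite <- (pow1 (w - theta)); apply pow_incr; lra).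
  nra. }
assert (HBk : B / ka <= B / ga)
  by (unfold Rdiv; apply Rmult_le_compat_l, Rinv_le_contravar; lra).
assert (HBg : B / ga * ga = B) by (field; lra).
cut (al * y - Rmax (ga * y) B <= (al - ga) * (B / ka)); [intros; lra|].
unfold Rmax; destruct (Rle_dec (ga * y) B) as [Hle|Hgt].
- assert (y <= B / ga) by (apply (Rmult_le_reg_r ga); lra).
  assert ((al - ga) * (B / ga) <= (al - ga) * (B / ka)) by (apply Rmult_le_compat_neg_l; lra).
  nra.
- assert (B / ga <= y) by (apply (Rmult_le_reg_r ga); lra).
  assert ((al - ga) * y <= (al - ga) * (B / ka)) by (apply Rmult_le_compat_neg_l; lra).
  lra.
Qed.

Lemma Hfun_weighted_series_le abar a c Mbar B theta y (f : nat -> R) (Sabar Sc Sa S1 : R) :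
  0 < abar ^ 2 < c ^ 2 -> c ^ 2 < 1 -> 0 < B -> 0 <= y -> (forall k, 0 <= f k) ->
  is_series (fun k => (abar ^ 2) ^ (theta + k) * f k) Sabar ->
  is_series (fun k => (c ^ 2) ^ (theta + k) * f k) Sc ->
  is_series (fun k => (a ^ 2) ^ (theta + k) * f k) Sa ->
  is_series (fun k => 1 ^ (theta + k) * f k) S1 ->
  exists J, is_series (fun k => Hfun abar a c Mbar B (theta + k) y * f k) J /\
    J <= (Sabar - Sc) * (B / c ^ (2 * theta)) + Mbar * (Sa - S1).
Proof.
intros Hac Hc HB Hy Hf Habar Hcs Ha H1.
set (m := fun k => Rmax ((c ^ 2) ^ (theta + k) * y) B * f k).
destruct (ex_series_Rle m (fun k => y * ((c ^ 2) ^ (theta + k) * f k) + B * (1 ^ (theta + k) * f k)))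
  as [Sm Hm].
{ intros k; unfold m; rewrite pow1; specialize (Hf k).
  assert (0 <= (c ^ 2) ^ (theta + k)) by (apply pow_le; lra).
  assert (0 <= Rmax ((c ^ 2) ^ (theta + k) * y) B) by (eapply Rle_trans; [|apply Rmax_r]; lra).
  assert (Rmax ((c ^ 2) ^ (theta + k) * y) B <= (c ^ 2) ^ (theta + k) * y + B)
    by (apply Rmax_lub; nra).
  split; nra. }
{ eexists; apply is_series_Rplus; apply is_series_Rscal; eassumption. }
assert (HJ : is_series (fun k => Hfun abar a c Mbar B (theta + k) y * f k)
                      (y * Sabar + Mbar * (Sa - S1) - Sm)).
{ apply (is_series_Rext (fun k => y * ((abar ^ 2) ^ (theta + k) * f k) +
            Mbar * ((a ^ 2) ^ (theta + k) * f k - 1 ^ (theta + k) * f k) - m k)).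
  { intros k; unfold m, Hfun; rewrite !pow_mult, pow1; ring. }
  apply is_series_Rminus; [|exact Hm].
  apply is_series_Rplus; apply is_series_Rscal; [|apply is_series_Rminus]; assumption. }
exists (y * Sabar + Mbar * (Sa - S1) - Sm); split; [exact HJ|].
apply (is_series_le _ (fun k => (((abar ^ 2) ^ (theta + k) - (c ^ 2) ^ (theta + k)) * (B / c ^ (2 * theta))
                                + Mbar * ((a ^ 2) ^ (theta + k) - 1 ^ (theta + k))) * f k) _ _ HJ).
- apply (is_series_Rext (fun k => (B / c ^ (2 * theta)) * ((abar ^ 2) ^ (theta + k) * f k - (c ^ 2) ^ (theta + k) * f k)
                                 + Mbar * ((a ^ 2) ^ (theta + k) * f k - 1 ^ (theta + k) * f k))).
  { intros k; ring. }
  rewrite (Rmult_comm (Sabar - Sc)).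
  apply is_series_Rplus; apply is_series_Rscal; apply is_series_Rminus; assumption.
- intros k; apply Rmult_le_compat_r; [apply Hf|].
  apply Hfun_le; auto; lia.
Qed.

Theorem mainTheorem4
  (a L abar c M B Mbar : R) (n : nat) (P0 P1 : mat) (e : vec)
  (Ha : 1 < Rabs a) (Habar : abar = a + L)
  (Habar2 : 0 < abar ^ 2 < 1) (Hc : abar ^ 2 < c ^ 2 < 1)
  (HM : 0 < M) (HB : 0 < B) (HMbar : Mbar = M / (a ^ 2 - 1))
  (Hn : (1 <= n)%nat)
  (HP0 : col_stochastic n P0) (HP1 : col_stochastic n P1)
  (He : forall i, (i < n)%nat -> 0 <= e i <= 1)
  (Hrho : forall re im, ceigen n (mmul n P1 (mdiag e)) re im ->
            a ^ 2 * sqrt (re ^ 2 + im ^ 2) < 1) :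
  forall (theta : nat) (g : nat) (x : R),
    (1 <= theta)%nat -> (g < n)%nat ->
    exists J : R,
      infinite_sum (Jterm n abar a c Mbar B P0 P1 e theta (x ^ 2) g) J /\
      J <= (gtilde n P0 P1 e theta (abar ^ 2) g - gtilde n P0 P1 e theta (c ^ 2) g)
             * (B / c ^ (2 * theta))
           + Mbar * (gtilde n P0 P1 e theta (a ^ 2) g - gtilde n P0 P1 e theta 1 g).
Proof.
(* Neither [theta >= 1] nor the values of [L], [M], [Mbar] are needed. *)
intros theta g x _ Hg.
destruct HP0 as [HP0 _]; destruct HP1 as [HP1 _].
set (A := mmul n P1 (mdiag e)).
set (f := fun k => dTMdelta n (fun i => 1 - e i)
                     (mmul n (mpow n A k) (mmul n (mpow n P0 (theta - 1)) P1)) g).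
assert (He0 : forall i, (i < n)%nat -> 0 <= e i) by (intros i Hi; apply He, Hi).
assert (HA : mat_nonneg n A) by (apply mmul_nonneg, mdiag_nonneg; assumption).
assert (Ha2 : 1 < a ^ 2) by (rewrite <- (pow2_abs a); nra).
assert (Hinv : forall t, 0 <= t <= a ^ 2 -> exists X, is_minv n (msub mid (mscale t A)) X)
  by (intros t Ht; exact (resolvent_invertible n A (a ^ 2) t Hrho Ht)).
destruct (pos_supervector_beyond n A HA (a ^ 2) ltac:(lra) Hinv) as [tp [Htp Hsup]].
assert (Hser : forall b, 0 <= b <= a ^ 2 ->
          is_series (fun k => b ^ (theta + k) * f k) (gtilde n P0 P1 e theta b g))
  by (intros b Hb; apply (gtilde_is_series _ _ _ _ _ _ _ tp); auto; lra).
assert (Hf : forall k, 0 <= f k).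
{ assert (HZ : mat_nonneg n (mmul n (mpow n P0 (theta - 1)) P1))
    by (apply mmul_nonneg; [apply mpow_nonneg|]; assumption).
  intros k; apply fsum_ge0; intros i Hi; apply Rmult_le_pos; [specialize (He i Hi); lra|].
  apply (mmul_nonneg n _ _ (mpow_nonneg n A k HA) HZ); assumption. }
destruct (Hfun_weighted_series_le abar a c Mbar B theta (x ^ 2) f
            _ _ _ _ ltac:(lra) ltac:(lra) HB (pow2_ge_0 x) Hf
            (Hser (abar ^ 2) ltac:(lra)) (Hser (c ^ 2) ltac:(lra))
            (Hser (a ^ 2) ltac:(lra)) (Hser 1 ltac:(lra)))
  as [J [HJ HJle]].
exists J; split; [apply is_series_Reals, HJ|exact HJle].
Qed.
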